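(* For every $E\subseteq\mathbb{F}_q^2$, $$\sum_{t\in\mathbb{F}_q^6}\nu_B(t)^2\le \Psi(2,2).$$
   Context: Standing assumptions: $q=p^n$ with $p$ a prime, $p\equiv 3\pmod 4$, $n$ odd. For $x,y\in\mathbb{F}_q^2$, $\|x-y\|=(x_1-y_1)^2+(x_2-y_2)^2$. $O(\mathbb{F}_q^2)$ is the group of $2\times2$ matrices $\theta$ over $\mathbb{F}_q$ with $\theta^T\theta=I$. $\lambda_\theta(w)=|\{(u,v)\in E^2: u-\theta v=w\}|$. For $t\in\mathbb{F}_q^6$, $\nu_B(t)$ is the number of $(x,y,z,u,v)\in E^5$ with $(\|x-y\|,\|x-z\|,\|y-z\|,\|x-u\|,\|x-v\|,\|u-v\|)=t$. For positive integers $a,b$, $$\Psi(a,b)=\sum_{x,x'\in\mathbb{F}_q^2}\ \sum_{\theta,\phi\in O(\mathbb{F}_q^2)}\lambda_\theta(x-\theta x')^a\,\lambda_\phi(x-\phi x')^b.$$ *)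

From HB Require Import structures.
From mathcomp Require Import all_boot all_order all_algebra.
Set Implicit Arguments. Unset Strict Implicit. Unset Printing Implicit Defensive.
Import GRing.Theory.
Local Open Scope ring_scope.

Section Defs.
Variable F : finFieldType.

Definition pt := 'cV[F]_2.

Definition sqn (x : pt) : F := \sum_(i < 2) x i ord0 ^+ 2.

Definition Ogrp : {set 'M[F]_2} := [set th : 'M[F]_2 | th^T *m th == 1%:M].

Definition lam (E : {set pt}) (th : 'M[F]_2) (w : pt) : nat :=
  #|[set uv : pt * pt | [&& uv.1 \in E, uv.2 \in E & uv.1 - th *m uv.2 == w]]|.

Definition dvec (x y z u v : pt) : 'rV[F]_6 :=
  \row_(i < 6) nth 0 [:: sqn (x - y); sqn (x - z); sqn (y - z);
                         sqn (x - u); sqn (x - v); sqn (u - v)] i.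

Definition nuB (E : {set pt}) (t : 'rV[F]_6) : nat :=
  #|[set w : pt * pt * pt * pt * pt |
      let: (x, y, z, u, v) := w in
      [&& x \in E, y \in E, z \in E, u \in E, v \in E & dvec x y z u v == t]]|.

Definition Psi (E : {set pt}) (a b : nat) : nat :=
  (\sum_(x : pt) \sum_(x' : pt) \sum_(th in Ogrp) \sum_(ph in Ogrp)
     (lam E th (x - th *m x')%R ^ a * lam E ph (x - ph *m x')%R ^ b)%N)%N.
End Defs.

From HB Require Import structures.
From mathcomp Require Import all_boot all_order all_algebra.
From mathcomp Require Import finfield ring.
Set Implicit Arguments. Unset Strict Implicit. Unset Printing Implicit Defensive.
Import GRing.Theory.

(* [\sum_t nu_B(t)^2] counts the pairs of configurations [(x,y,z,u,v)],
   [(x',y',z',u',v')] in [E^5] with the same distance vector.  The triangles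
   [xyz] and [x'y'z'] are then congruent, and since [q = 3 mod 4] the form
   [x1^2 + x2^2] is anisotropic, so Witt's theorem in dimension 2 yields
   [theta] in [O(F_q^2)] with [y - theta y' = z - theta z' = x - theta x'];
   likewise some [phi] works for [xuv] and [x'u'v'].  The pair of
   configurations is recovered from [(x, x', theta, phi)] and the four pairs
   [(y,y'), (z,z'), (u,u'), (v,v')], each of which is counted by a factor of
   [lambda_theta(x - theta x')] or [lambda_phi(x - phi x')] in [Psi(2,2)]. *)

Local Open Scope ring_scope.

Definition anisotropic (R : pzRingType) :=
  forall x y : R, x ^+ 2 + y ^+ 2 = 0 -> x = 0 /\ y = 0.

Section PrimePowerField.
Variables (F : finFieldType) (p n : nat).
Hypotheses (p_prime : prime p) (p_mod4 : (p %% 4 = 3)%N) (n_odd : odd n)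
  (cardF : #|F| = (p ^ n)%N).

Lemma two_neq0 : (2 : F) != 0.
Proof.
have pcharF := card_finPcharP cardF p_prime.
have p_odd : p = (p %/ 2 * 2 + 1)%N.
  rewrite {1}(divn_eq p 2); congr (_ + _)%N.
  by rewrite -(modn_dvdm p (_ : 2 %| 4))%N // p_mod4.
apply/eqP => two0; move: (pcharf0 pcharF).
by rewrite p_odd natrD natrM two0 mulr0 add0r => /eqP; rewrite oner_eq0.
Qed.

Lemma card_mod4 : (#|F| %% 4 = 3)%N.
Proof.
rewrite cardF -modnXm p_mod4 -(odd_double_half n) n_odd -muln2 mulnC.
by rewrite expnD expnM -modnMm -(modnXm n./2 4 (3 ^ 2)) exp1n.
Qed.

(* If [i^2 = -1] then [i^4 = 1], so [i = i^q = i^3 = -i]. *)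
Lemma sqrf_neqN1 (i : F) : i ^+ 2 != -1.
Proof.
apply/eqP => i2; have := expf_card i.
rewrite (divn_eq #|F| 4) card_mod4 mulnC exprD exprM.
have -> : i ^+ 4 = 1 by rewrite (_ : 4 = 2 + 2)%N // exprD i2 mulrNN mulr1.
rewrite expr1n mul1r (_ : 3 = 1 + 2)%N // exprD i2 expr1 mulrN1 => /eqP.
rewrite -subr_eq0 -opprD -mulr2n oppr_eq0 -mulr_natr mulf_eq0.
rewrite (negbTE two_neq0) orbF => /eqP i0.
move: i2; rewrite i0 expr0n /= => /eqP.
by rewrite eq_sym oppr_eq0 oner_eq0.
Qed.

Lemma anisotropic_prime_power : anisotropic F.
Proof.
move=> x y sum0; have [y0|y_neq0] := eqVneq y 0.
  by move: sum0; rewrite y0 expr0n addr0 => /eqP; rewrite expf_eq0 => /eqP.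
have x2 : x ^+ 2 = - y ^+ 2 by apply/eqP; rewrite -subr_eq0 opprK sum0.
by move: (sqrf_neqN1 (x / y)); rewrite expr_div_n x2 mulNr divff ?expf_neq0 ?eqxx.
Qed.

End PrimePowerField.

Section Witt2.
Variable F : fieldType.

Definition orth2 (m00 m01 m10 m11 : F) :=
  [/\ m00 ^+ 2 + m10 ^+ 2 = 1, m00 * m01 + m10 * m11 = 0 & m01 ^+ 2 + m11 ^+ 2 = 1].

Definition maps2 (m00 m01 m10 m11 c1 c2 a1 a2 : F) :=
  m00 * c1 + m01 * c2 = a1 /\ m10 * c1 + m11 * c2 = a2.

Definition orth_carries (a1 a2 b1 b2 c1 c2 d1 d2 : F) :=
  exists m00 m01 m10 m11, [/\ orth2 m00 m01 m10 m11,
    maps2 m00 m01 m10 m11 c1 c2 a1 a2 & maps2 m00 m01 m10 m11 d1 d2 b1 b2].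

(* The witness is the matrix [[a b] [c d]^-1] given by Cramer's rule; it is
   orthogonal because [a, b] and [c, d] have the same Gram matrix. *)
Lemma orth_carries_indep (a1 a2 b1 b2 c1 c2 d1 d2 : F) :
  a1 ^+ 2 + a2 ^+ 2 = c1 ^+ 2 + c2 ^+ 2 -> b1 ^+ 2 + b2 ^+ 2 = d1 ^+ 2 + d2 ^+ 2 ->
  a1 * b1 + a2 * b2 = c1 * d1 + c2 * d2 -> c1 * d2 - c2 * d1 != 0 ->
  orth_carries a1 a2 b1 b2 c1 c2 d1 d2.
Proof.
move=> gA gB gD; set de := c1 * d2 - c2 * d1 => de_neq0.
exists ((a1 * d2 - b1 * c2) / de), ((b1 * c1 - a1 * d1) / de),
  ((a2 * d2 - b2 * c2) / de), ((b2 * c1 - a2 * d1) / de).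
have col0 : (a1 * d2 - b1 * c2) ^+ 2 + (a2 * d2 - b2 * c2) ^+ 2 = de ^+ 2.
  transitivity (d2 ^+ 2 * (a1 ^+ 2 + a2 ^+ 2) - 2 * c2 * d2 * (a1 * b1 + a2 * b2)
    + c2 ^+ 2 * (b1 ^+ 2 + b2 ^+ 2)); first by ring.
  by rewrite gA gB gD /de; ring.
have col01 : (a1 * d2 - b1 * c2) * (b1 * c1 - a1 * d1)
    + (a2 * d2 - b2 * c2) * (b2 * c1 - a2 * d1) = 0.
  transitivity (- (d1 * d2) * (a1 ^+ 2 + a2 ^+ 2)
    + (c1 * d2 + c2 * d1) * (a1 * b1 + a2 * b2)
    - c1 * c2 * (b1 ^+ 2 + b2 ^+ 2)); first by ring.
  by rewrite gA gB gD; ring.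
have col1 : (b1 * c1 - a1 * d1) ^+ 2 + (b2 * c1 - a2 * d1) ^+ 2 = de ^+ 2.
  transitivity (c1 ^+ 2 * (b1 ^+ 2 + b2 ^+ 2) - 2 * c1 * d1 * (a1 * b1 + a2 * b2)
    + d1 ^+ 2 * (a1 ^+ 2 + a2 ^+ 2)); first by ring.
  by rewrite gA gB gD /de; ring.
split; [split|split|split].
- by rewrite !expr_div_n -mulrDl col0 divff // expf_neq0.
- by rewrite !mulf_div -mulrDl col01 mul0r.
- by rewrite !expr_div_n -mulrDl col1 divff // expf_neq0.
all: by rewrite /de; field.
Qed.

Hypothesis F_aniso : anisotropic F.

(* Carry the frame [c, c^perp] onto [a, a^perp]; anisotropy then forces
   [d = t c] and [b = t a] for the same scalar [t]. *)
Lemma orth_carries_dep (a1 a2 b1 b2 c1 c2 d1 d2 : F) :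
  a1 ^+ 2 + a2 ^+ 2 = c1 ^+ 2 + c2 ^+ 2 -> b1 ^+ 2 + b2 ^+ 2 = d1 ^+ 2 + d2 ^+ 2 ->
  a1 * b1 + a2 * b2 = c1 * d1 + c2 * d2 -> c1 * d2 - c2 * d1 = 0 ->
  c1 ^+ 2 + c2 ^+ 2 != 0 ->
  orth_carries a1 a2 b1 b2 c1 c2 d1 d2.
Proof.
move=> gA gB gD de0 c_neq0.
have [m00 [m01 [m10 [m11 [orthm [c_to_a1 c_to_a2] _]]]]] :
    orth_carries a1 a2 (- a2) a1 c1 c2 (- c2) c1.
  apply: orth_carries_indep => //.
  - by rewrite sqrrN addrC gA addrC sqrrN.
  - by ring.
  - by rewrite (_ : c1 * c1 - c2 * - c2 = c1 ^+ 2 + c2 ^+ 2) //; ring.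
set t := (c1 * d1 + c2 * d2) / (c1 ^+ 2 + c2 ^+ 2).
have d_tc : (d1 - t * c1) ^+ 2 + (d2 - t * c2) ^+ 2 = 0.
  have -> : (d1 - t * c1) ^+ 2 + (d2 - t * c2) ^+ 2 =
      (c1 * d2 - c2 * d1) ^+ 2 / (c1 ^+ 2 + c2 ^+ 2) by rewrite /t; field.
  by rewrite de0 expr0n mul0r.
have b_ta : (b1 - t * a1) ^+ 2 + (b2 - t * a2) ^+ 2 = 0.
  rewrite -d_tc; transitivity ((b1 ^+ 2 + b2 ^+ 2)
    - 2 * t * (a1 * b1 + a2 * b2) + t ^+ 2 * (a1 ^+ 2 + a2 ^+ 2)); first by ring.
  by rewrite gA gB gD; ring.
have [/subr0_eq -> /subr0_eq ->] := F_aniso d_tc.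
have [/subr0_eq -> /subr0_eq ->] := F_aniso b_ta.
exists m00, m01, m10, m11; split => //; split.
- by rewrite -c_to_a1; ring.
- by rewrite -c_to_a2; ring.
Qed.

Lemma orth_carries_gram (a1 a2 b1 b2 c1 c2 d1 d2 : F) :
  a1 ^+ 2 + a2 ^+ 2 = c1 ^+ 2 + c2 ^+ 2 -> b1 ^+ 2 + b2 ^+ 2 = d1 ^+ 2 + d2 ^+ 2 ->
  a1 * b1 + a2 * b2 = c1 * d1 + c2 * d2 ->
  orth_carries a1 a2 b1 b2 c1 c2 d1 d2.
Proof.
move=> gA gB gD.
have [de0|] := eqVneq (c1 * d2 - c2 * d1) 0; last exact: orth_carries_indep.
have [c0|] := eqVneq (c1 ^+ 2 + c2 ^+ 2) 0; last exact: orth_carries_dep.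
have [d0|d_neq0] := eqVneq (d1 ^+ 2 + d2 ^+ 2) 0.
  have [-> ->] : a1 = 0 /\ a2 = 0 by apply: F_aniso; rewrite gA.
  have [-> ->] : b1 = 0 /\ b2 = 0 by apply: F_aniso; rewrite gB.
  have [-> ->] := F_aniso c0; have [-> ->] := F_aniso d0.
  by exists 1, 0, 0, 1; split; [split|split|split]; ring.
have [m00 [m01 [m10 [m11 [orthm d_to_b c_to_a]]]]] :
    orth_carries b1 b2 a1 a2 d1 d2 c1 c2.
  apply: orth_carries_dep => //.
  - by rewrite mulrC [b2 * _]mulrC gD; ring.
  - by rewrite -oppr0 -de0; ring.
by exists m00, m01, m10, m11.
Qed.

End Witt2.

Lemma sum_pair (I J : finType) (G : I * J -> nat) :
  (\sum_k G k = \sum_i \sum_j G (i, j))%N.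
Proof. by rewrite pair_big /=; apply: eq_big => // -[i j]. Qed.

Lemma card_sigma (K V : finType) (C : K -> {set V}) :
  #|[set kv : K * V | kv.2 \in C kv.1]| = (\sum_k #|C k|)%N.
Proof.
rewrite -sum1_card big_mkcond /= sum_pair; apply: eq_bigr => k _.
by rewrite -sum1_card [RHS]big_mkcond; apply: eq_bigr => v _; rewrite inE.
Qed.

Lemma card_le_sum (T K V : finType) (A : {set T}) (C : K -> {set V})
    (g : T -> K * V) :
  {in A &, injective g} -> (forall t, t \in A -> (g t).2 \in C (g t).1) ->
  (#|A| <= \sum_k #|C k|)%N.
Proof.
move=> g_inj gA; rewrite -card_sigma -(card_in_imset g_inj).
by apply/subset_leq_card/subsetP => _ /imsetP[t tA ->]; rewrite inE gA.
Qed.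

Section OrthogonalPlane.
Variable F : finFieldType.

Definition mx2 (m00 m01 m10 m11 : F) : 'M[F]_2 := \matrix_(i, j)
  if i == ord0 then (if j == ord0 then m00 else m01)
  else (if j == ord0 then m10 else m11).

Lemma ord2_ind (P : 'I_2 -> Prop) : P ord0 -> P ord_max -> forall i, P i.
Proof.
move=> P0 P1 [[|[|//]] i_lt].
- by rewrite (_ : Ordinal i_lt = ord0) //; apply: val_inj.
- by rewrite (_ : Ordinal i_lt = ord_max) //; apply: val_inj.
Qed.

Lemma sum_ord2 (G : 'I_2 -> F) : \sum_i G i = G ord0 + G ord_max.
Proof.
by rewrite !big_ord_recl big_ord0 addr0; congr (_ + G _); apply: val_inj.
Qed.

Lemma sqnE (w : pt F) : sqn w = w ord0 ord0 ^+ 2 + w ord_max ord0 ^+ 2.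
Proof. exact: sum_ord2. Qed.

Lemma pt_eq (a b : pt F) :
  a ord0 ord0 = b ord0 ord0 -> a ord_max ord0 = b ord_max ord0 -> a = b.
Proof. by move=> a0 a1; apply/matrixP => i j; rewrite (ord1 j); elim/ord2_ind: i. Qed.

Lemma mx2_mul0 m00 m01 m10 m11 (c : pt F) :
  (mx2 m00 m01 m10 m11 *m c) ord0 ord0 = m00 * c ord0 ord0 + m01 * c ord_max ord0.
Proof. by rewrite mxE sum_ord2 !mxE. Qed.

Lemma mx2_mul1 m00 m01 m10 m11 (c : pt F) :
  (mx2 m00 m01 m10 m11 *m c) ord_max ord0 = m10 * c ord0 ord0 + m11 * c ord_max ord0.
Proof. by rewrite mxE sum_ord2 !mxE. Qed.

Lemma mx2_Ogrp m00 m01 m10 m11 : orth2 m00 m01 m10 m11 -> mx2 m00 m01 m10 m11 \in Ogrp F.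
Proof.
case=> col0 col01 col1; rewrite inE; apply/eqP/matrixP => i j.
rewrite !mxE sum_ord2 !mxE.
elim/ord2_ind: i; elim/ord2_ind: j => //=; rewrite -?expr2 //.
by rewrite mulrC [m11 * _]mulrC.
Qed.

Lemma sqnB (a b : pt F) : sqn (a - b) = sqn (b - a).
Proof. by rewrite !sqnE !mxE; ring. Qed.

Hypotheses (two_neq0 : (2 : F) != 0) (F_aniso : anisotropic F).

Lemma Ogrp_carries (a b c d : pt F) :
  sqn a = sqn c -> sqn b = sqn d -> sqn (a - b) = sqn (c - d) ->
  exists2 th, th \in Ogrp F & th *m c = a /\ th *m d = b.
Proof.
rewrite !sqnE !mxE => gA gB gAB.
have gD : a ord0 ord0 * b ord0 ord0 + a ord_max ord0 * b ord_max ord0 =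
          c ord0 ord0 * d ord0 ord0 + c ord_max ord0 * d ord_max ord0.
  apply: (mulfI two_neq0); transitivity (
    (a ord0 ord0 ^+ 2 + a ord_max ord0 ^+ 2) + (b ord0 ord0 ^+ 2 + b ord_max ord0 ^+ 2)
    - ((a ord0 ord0 - b ord0 ord0) ^+ 2 + (a ord_max ord0 - b ord_max ord0) ^+ 2)).
    by ring.
  by rewrite gA gB gAB; ring.
have [m00 [m01 [m10 [m11 [orthm [c_a0 c_a1] [d_b0 d_b1]]]]]] :=
  orth_carries_gram F_aniso gA gB gD.
exists (mx2 m00 m01 m10 m11); first exact: mx2_Ogrp.
by split; apply: pt_eq; rewrite ?mx2_mul0 ?mx2_mul1.
Qed.

Definition Ogrp_pick (a b c d : pt F) : 'M[F]_2 :=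
  odflt 1%:M [pick th in Ogrp F | (th *m c == a) && (th *m d == b)].

Lemma Ogrp_pickP (a b c d : pt F) :
  sqn a = sqn c -> sqn b = sqn d -> sqn (a - b) = sqn (c - d) ->
  [/\ Ogrp_pick a b c d \in Ogrp F, Ogrp_pick a b c d *m c = a
    & Ogrp_pick a b c d *m d = b].
Proof.
move=> gA gB gAB; rewrite /Ogrp_pick; case: pickP => [th|none] /=.
  by case/andP=> thO /andP[/eqP-> /eqP->].
have [th thO [th_c th_d]] := Ogrp_carries gA gB gAB.
by move: (none th); rewrite thO th_c th_d !eqxx.
Qed.

Definition triangle_motion (x y z x' y' z' : pt F) : 'M[F]_2 :=
  Ogrp_pick (y - x) (z - x) (y' - x') (z' - x').

Lemma triangle_motionP (x y z x' y' z' : pt F) :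
  sqn (x - y) = sqn (x' - y') -> sqn (x - z) = sqn (x' - z') ->
  sqn (y - z) = sqn (y' - z') ->
  let th := triangle_motion x y z x' y' z' in
  [/\ th \in Ogrp F, y - th *m y' = x - th *m x' & z - th *m z' = x - th *m x'].
Proof.
move=> gxy gxz gyz th.
have subB (a b c : pt F) : (a - c) - (b - c) = a - b by rewrite opprB addrA subrK.
have [thO th_y th_z] : [/\ th \in Ogrp F, th *m (y' - x') = y - x
    & th *m (z' - x') = z - x].
  by apply: Ogrp_pickP; rewrite ?subB // sqnB 1?gxy 1?gxz sqnB.
have move_eq (w w' : pt F) : th *m (w' - x') = w - x -> w - th *m w' = x - th *m x'.
  rewrite mulmxBr => e; apply/eqP.
  by rewrite subr_eq -addrA addrC -subr_eq -e addrC.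
by split => //; apply: move_eq.
Qed.

End OrthogonalPlane.

Section Counting.
Variables (F : finFieldType) (E : {set pt F}).
Hypotheses (two_neq0 : (2 : F) != 0) (F_aniso : anisotropic F).

Definition config := (pt F * pt F * pt F * pt F * pt F)%type.

Definition dvec_fiber (t : 'rV[F]_6) : {set config} :=
  [set w : config | let: (x, y, z, u, v) := w in
    [&& x \in E, y \in E, z \in E, u \in E, v \in E & dvec x y z u v == t]].

Definition lam_set (th : 'M[F]_2) (w : pt F) : {set pt F * pt F} :=
  [set uv | [&& uv.1 \in E, uv.2 \in E & uv.1 - th *m uv.2 == w]].

Definition code_index := (pt F * (pt F * ('M[F]_2 * 'M[F]_2)))%type.
Definition code_value :=
  ((pt F * pt F) * (pt F * pt F) * ((pt F * pt F) * (pt F * pt F)))%type.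

Definition Psi_fiber (k : code_index) : {set code_value} :=
  let: (x, (x', (th, ph))) := k in
  if (th \in Ogrp F) && (ph \in Ogrp F) then
    setX (setX (lam_set th (x - th *m x')) (lam_set th (x - th *m x')))
         (setX (lam_set ph (x - ph *m x')) (lam_set ph (x - ph *m x')))
  else set0.

Lemma sum_nuB_sqr :
  (\sum_(t : 'rV[F]_6) nuB E t ^ 2)%N =
  #|[set tw : 'rV[F]_6 * (config * config) |
       tw.2 \in setX (dvec_fiber tw.1) (dvec_fiber tw.1)]|.
Proof.
rewrite (card_sigma (fun t => setX (dvec_fiber t) (dvec_fiber t))).
by apply: eq_bigr => t _; rewrite cardsX mulnn.
Qed.

Lemma Psi22E : Psi E 2 2 = (\sum_k #|Psi_fiber k|)%N.
Proof.
rewrite /Psi sum_pair; apply: eq_bigr => x _; rewrite sum_pair.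
apply: eq_bigr => x' _; rewrite sum_pair [LHS]big_mkcond; apply: eq_bigr => th _.
case thO: (th \in Ogrp F); last by rewrite big1 // => ph _; rewrite /= thO cards0.
rewrite [LHS]big_mkcond; apply: eq_bigr => ph _; rewrite /= thO.
by case: (ph \in Ogrp F); rewrite ?cards0 // !cardsX -!mulnn.
Qed.

(* The distance vector [t] is dropped: it is determined by the configurations. *)
Definition encode (tw : 'rV[F]_6 * (config * config)) : code_index * code_value :=
  let: (_, ((x, y, z, u, v), (x', y', z', u', v'))) := tw in
  ((x, (x', (triangle_motion x y z x' y' z', triangle_motion x u v x' u' v'))),
   (((y, y'), (z, z')), ((u, u'), (v, v')))).

Lemma encode_inj :
  {in [set tw | tw.2 \in setX (dvec_fiber tw.1) (dvec_fiber tw.1)] &,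
    injective encode}.
Proof.
move=> [t1 [[[[[x1 y1] z1] u1] v1] w1']] [t2 [[[[[x2 y2] z2] u2] v2] w2']].
case: w1' w2' => [[[[x1' y1'] z1'] u1'] v1'] [[[[x2' y2'] z2'] u2'] v2'].
rewrite !inE /= => /andP[/and5P[_ _ _ _ /andP[_ /eqP <-]] _].
move=> /andP[/and5P[_ _ _ _ /andP[_ /eqP <-]] _].
by case=> -> -> _ _ -> -> -> -> -> -> -> ->.
Qed.

Lemma encode_Psi_fiber tw :
  tw \in [set tw | tw.2 \in setX (dvec_fiber tw.1) (dvec_fiber tw.1)] ->
  (encode tw).2 \in Psi_fiber (encode tw).1.
Proof.
case: tw => t [[[[[x y] z] u] v] [[[[x' y'] z'] u'] v']].
rewrite !inE /= => /andP[/and5P[xE yE zE uE /andP[vE /eqP dv]]].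
case/and5P=> xE' yE' zE' uE' /andP[vE' /eqP dv'].
have dist k := congr1 (fun M : 'rV[F]_6 => M ord0 k) (etrans dv (esym dv')).
have := dist (@Ordinal 6 0 isT); have := dist (@Ordinal 6 1 isT).
have := dist (@Ordinal 6 2 isT); have := dist (@Ordinal 6 3 isT).
have := dist (@Ordinal 6 4 isT); have := dist (@Ordinal 6 5 isT).
rewrite /= !mxE /= => duv dxv dxu dyz dxz dxy.
have [thO y_th z_th] := triangle_motionP two_neq0 F_aniso dxy dxz dyz.
have [phO u_ph v_ph] := triangle_motionP two_neq0 F_aniso dxu dxv duv.
rewrite /= thO phO /= !in_setX !inE /=.
by rewrite yE zE uE vE yE' zE' uE' vE' y_th z_th u_ph v_ph !eqxx.
Qed.

End Counting.

Local Close Scope ring_scope.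

Theorem lemma3p1 (F : finFieldType) (p n : nat)
  (hp : prime p) (hp4 : p %% 4 = 3) (hn : odd n) (hq : #|F| = p ^ n)
  (E : {set pt F}) :
  (\sum_(t : 'rV[F]_6) nuB E t ^ 2 <= Psi E 2 2)%N.
Proof.
have two0 := two_neq0 hp hp4 hq.
have aniso := anisotropic_prime_power hp hp4 hn hq.
rewrite sum_nuB_sqr Psi22E.
exact: card_le_sum (@encode_inj F E) (encode_Psi_fiber two0 aniso).
Qed.
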